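(* Every cyclic triangulation of a closed surface is $q$-equivelar for some $q$ with either $q=3k$ or $q=3k+1$ for some integer $k\ge 1$.
   Context: For an integer $n\ge 3$ identify a vertex set with $\mathbb{Z}_n=\{0,1,\dots,n-1\}$. A cyclic triangulation with $n$ vertices is a simplicial complex on the vertex set $\mathbb{Z}_n$ that triangulates a closed (compact, connected, boundaryless) surface and is invariant under the shift $i\mapsto i+1$. A triangulation is $q$-equivelar if every vertex lies in exactly $q$ triangles. *)

From mathcomp Require Import all_boot.
Set Implicit Arguments. Unset Strict Implicit. Unset Printing Implicit Defensive.

(* A (pure, 2-dimensional) simplicial complex on the vertex set Z_n = 'I_n is
   given by its set T of triangles (3-element vertex sets); edges and vertices
   are the faces of the triangles. *)

Definition shift (n : nat) (i : 'I_n) : 'I_n := ordS i.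

Definition edge_deg n (T : {set {set 'I_n}}) (a b : 'I_n) : nat :=
  #|[set t in T | (a \in t) && (b \in t)]|.

(* x, y lie in a common triangle (1-skeleton adjacency, reflexive on used vertices) *)
Definition adj n (T : {set {set 'I_n}}) : rel 'I_n :=
  fun x y => [exists t in T, (x \in t) && (y \in t)].

Definition link_rel n (T : {set {set 'I_n}}) (v : 'I_n) : rel 'I_n :=
  fun a b => [set v; a; b] \in T.

Definition link_vertices n (T : {set {set 'I_n}}) (v : 'I_n) : {set 'I_n} :=
  [set a | [exists b, link_rel T v a b]].

(* T is a triangulation of a closed (compact, connected, boundaryless)
   surface with vertex set 'I_n: every simplex is a triangle, every vertex
   is used, every edge lies in exactly two triangles, the link of every
   vertex is connected (hence a single cycle), and the complex is connected. *)
Definition closed_surface_triangulation n (T : {set {set 'I_n}}) : Prop :=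
  [/\ forall t, t \in T -> #|t| = 3,
      forall v : 'I_n, exists2 t, t \in T & v \in t,
      forall a b : 'I_n, a != b -> adj T a b -> edge_deg T a b = 2,
      forall v a b : 'I_n, a \in link_vertices T v -> b \in link_vertices T v ->
                       connect (link_rel T v) a b
    & forall x y : 'I_n, connect (adj T) x y].

Definition shift_invariant n (T : {set {set 'I_n}}) : Prop :=
  forall t, t \in T -> [set shift x | x in t] \in T.

Definition cyclic_triangulation n (T : {set {set 'I_n}}) : Prop :=
  3 <= n /\ closed_surface_triangulation T /\ shift_invariant T.

Definition equivelar n (T : {set {set 'I_n}}) (q : nat) : Prop :=
  forall v : 'I_n, #|[set t in T | v \in t]| = q.

From mathcomp Require Import all_boot all_algebra all_fingroup all_solvable zify ring.
Set Implicit Arguments. Unset Strict Implicit. Unset Printing Implicit Defensive.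
Import GRing.Theory.

(* Translations of Z_n preserve T, so every vertex has the degree q of 0.  The
   triangles through 0 correspond two-to-one to the ordered pairs (x, y) with
   {0, x, y} a triangle, and (x, y) |-> (y - x, -x) permutes these 2q pairs with
   order 3.  By the mod p lemma for the action of a 3-group, 2q is congruent
   mod 3 to the number of fixed pairs; these are the (x, -x) with 3x = 0, so
   there are 0 or 2 of them.  Hence q = 0 or 1 mod 3, and q >= 2 because every
   edge lies in two triangles. *)

Lemma card_orderings_in_triangle (X : finType) (v : X) (t : {set X}) :
  #|t| = 3 -> v \in t ->
  #|[set p : X * X | [&& p.1 != v, p.2 != v, p.1 != p.2 & [set v; p.1; p.2] == t]]| = 2.
Proof.
move=> t3 vt.
have /eqP/cards2P[a [b [ab tDv]]] : #|t :\ v| = 2.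
  by move: t3; rewrite (cardsD1 v) vt => -[].
have /setD1P[av _] : a \in t :\ v by rewrite tDv !inE eqxx.
have /setD1P[bv _] : b \in t :\ v by rewrite tDv !inE eqxx orbT.
have tE : t = [set v; a; b].
  by rewrite -(setD1K vt) tDv; apply/setP => z; rewrite !inE orbA.
transitivity #|[set (a, b); (b, a)]|; last by rewrite cards2 xpair_eqE (negbTE ab).
apply: eq_card => -[x y]; rewrite !inE /= tE; apply/idP/idP.
  case/and4P=> xv yv + /eqP e.
  have : x \in [set v; a; b] by rewrite -e !inE eqxx orbT.
  have : y \in [set v; a; b] by rewrite -e !inE eqxx !orbT.
  rewrite !inE (negbTE xv) (negbTE yv) /=.
  by move=> /orP[]/eqP-> /orP[]/eqP->; rewrite ?eqxx ?orbT.
case/orP=> /eqP[-> ->]; rewrite av bv ?ab 1?eq_sym ?ab //=.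
by apply/eqP/setP => z; rewrite !inE orbAC.
Qed.

Definition vertex_deg n (T : {set {set 'I_n}}) (v : 'I_n) := #|[set t in T | v \in t]|.

Section CyclicTriangulation.
Variables (m : nat) (T : {set {set 'I_m.+2}}).
Local Notation Z := 'I_m.+2.
Local Open Scope ring_scope.

Lemma Zp_3torsion_eq (u x : Z) :
  u != 0 -> x != 0 -> u *+ 3 = 0 -> x *+ 3 = 0 -> u = x \/ u = - x.
Proof.
have val3 (z : Z) : z != 0 -> z *+ 3 = 0 ->
    (3 * z = m.+2 \/ 3 * z = 2 * m.+2)%N.
  move=> z0 /(congr1 val); rewrite Zp_mulrn /= => /eqP.
  rewrite -/(dvdn _ _) => /dvdnP[k zk].
  have zpos : (0 < z)%N by rewrite lt0n; apply: contra z0 => /eqP z0; apply/eqP/val_inj.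
  have := ltn_ord z; case: k zk => [|[|[|k]]] zk; nia.
move=> u0 x0 /(val3 _ u0) u3 /(val3 _ x0) x3.
have [ux|ux] : (u = x :> nat \/ u + x = m.+2)%N by lia.
  by left; apply: val_inj.
right; apply: val_inj => /=; rewrite modn_small; lia.
Qed.

Lemma shiftE (x : Z) : shift x = x + 1.
Proof. by apply: val_inj; rewrite /= addn1. Qed.

Definition translate (c : Z) (t : {set Z}) := [set x + c | x in t].

Lemma translate_triangle (a b c d : Z) :
  translate d [set a; b; c] = [set a + d; b + d; c + d].
Proof. by rewrite /translate !imsetU !imset_set1. Qed.

Hypothesis shiftT : shift_invariant T.

Lemma translate_closed c t : t \in T -> translate c t \in T.
Proof.
move=> tT; rewrite -[c]natr_Zp; elim: (nat_of_ord c) => [|k IHk].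
  by rewrite /translate (eq_imset _ (@addr0 _)) imset_id.
have -> : translate k.+1%:R t = [set shift x | x in translate k%:R t].
  rewrite /translate -imset_comp; apply: eq_imset => x /=.
  by rewrite shiftE mulrS addrCA addrC.
exact: shiftT IHk.
Qed.

Lemma vertex_deg_translate v c : (vertex_deg T v <= vertex_deg T (v + c)%R)%N.
Proof.
rewrite /vertex_deg -(card_imset _ (imset_inj (addIr c))).
apply/subset_leq_card/subsetP => s /imsetP[t]; rewrite !inE => /andP[tT vt] ->.
by rewrite translate_closed //=; apply/imsetP; exists v.
Qed.

Lemma vertex_deg_const v : vertex_deg T v = vertex_deg T 0.
Proof.
apply/eqP; rewrite eqn_leq.
by have := vertex_deg_translate 0 v; have := vertex_deg_translate v (- v);
   rewrite add0r subrr => -> ->.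
Qed.

Definition link_pairs :=
  [set p : Z * Z | [&& p.1 != 0, p.2 != 0, p.1 != p.2 & [set 0; p.1; p.2] \in T]].

(* Translating the triangle {0, x, y} by -x moves x to 0; the new pair lists the
   remaining vertices in the same cyclic order. *)
Definition rot (p : Z * Z) : Z * Z := (p.2 - p.1, - p.1).

Lemma rot3 p : rot (rot (rot p)) = p.
Proof. by case: p => x y; rewrite /rot /=; congr pair; ring. Qed.

Lemma rot_link_pairs p : (rot p \in link_pairs) = (p \in link_pairs).
Proof.
suff rotL q : q \in link_pairs -> rot q \in link_pairs.
  by apply/idP/idP => [/rotL/rotL|/rotL//]; rewrite rot3.
case: q => x y; rewrite !inE /= => /and4P[x0 y0 xy tT].
rewrite subr_eq0 eq_sym xy oppr_eq0 x0 -subr_eq0 opprK subrK y0 /=.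
have := translate_closed (- x) tT; rewrite translate_triangle add0r subrr.
by congr (_ \in T); apply/setP => z; rewrite !inE -orbA orbC.
Qed.

Lemma rot_fixed p : (rot p == p) = (p.2 == - p.1) && (p.1 *+ 3 == 0).
Proof.
case: p => x y; rewrite /rot xpair_eqE /= andbC eq_sym.
have [-> | //] := eqVneq y (- x).
by rewrite -opprD eq_sym -subr_eq0 opprK -mulr2n -mulrS.
Qed.

Hypothesis triangleT : forall t, t \in T -> #|t| = 3%N.

Lemma card_link_pairs : #|link_pairs| = (2 * vertex_deg T 0%R)%N.
Proof.
rewrite -sum1_card (partition_big (fun p => [set 0; p.1; p.2]) [in [set t in T | 0 \in t]]).
  rewrite /vertex_deg mulnC -sum_nat_const; apply: eq_bigr => t; rewrite inE => /andP[tT t0].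
  rewrite -(card_orderings_in_triangle (triangleT tT) t0) -sum1_card.
  apply: eq_bigl => p; rewrite !inE.
  by have [->|_] := eqVneq [set 0; p.1; p.2] t; rewrite ?tT ?andbT ?andbF.
by case=> x y; rewrite !inE /= => /and4P[_ _ _ ->].
Qed.

Lemma card_rot_fixed_link_pairs :
  #|[set p in link_pairs | rot p == p]| = 0%N \/ #|[set p in link_pairs | rot p == p]| = 2%N.
Proof.
have [->|[[x y]]] := set_0Vmem [set p in link_pairs | rot p == p]; first by left; rewrite cards0.
rewrite inE rot_fixed /= => /andP[xL /andP[/eqP yE /eqP x3]]; rewrite {y}yE in xL.
have [x0 xNx] : x != 0 /\ x != - x by move: xL; rewrite inE /= => /and4P[].
have NxL : (- x, x) \in link_pairs.
  move: xL; rewrite !inE /= oppr_eq0 x0 (eq_sym (- x)) xNx /= => tT.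
  by rewrite (_ : [set 0; - x; x] = [set 0; x; - x]) //; apply/setP => z; rewrite !inE orbAC.
right; transitivity #|[set (x, - x); (- x, x)]|; last by rewrite cards2 xpair_eqE (negbTE xNx).
apply: eq_card => -[u v]; rewrite inE rot_fixed in_set2 /=; apply/idP/idP.
  case/and3P=> uL /eqP-> /eqP u3; have u0 : u != 0 by move: uL; rewrite inE => /and4P[].
  by case: (Zp_3torsion_eq u0 x0 u3 x3) => ->; rewrite ?opprK eqxx ?orbT.
by case/orP=> /eqP[-> ->]; rewrite ?opprK eqxx ?mulNrn x3 ?oppr0 eqxx ?xL ?NxL.
Qed.

Lemma rot_inj : injective rot.
Proof. exact: (can_inj (g := rot \o rot) rot3). Qed.

Definition rot_perm : {perm Z * Z} := perm rot_inj.

Lemma rot_perm_order3 : (rot_perm ^+ 3 = 1)%g.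
Proof. by apply/permP => p; rewrite !expgS expg0 mulg1 !permM !permE !rot3. Qed.

Lemma card_link_pairs_mod3 :
  #|link_pairs| = #|[set p in link_pairs | rot p == p]| %[mod 3].
Proof.
have rot_3group : (3.-group <[rot_perm]>)%g.
  rewrite /pgroup -orderE; apply: pnat_dvd (pnat_id (isT : prime 3)).
  by rewrite order_dvdn rot_perm_order3.
have rot_acts : [acts <[rot_perm]>, on link_pairs | 'P]%g.
  by rewrite cycle_subG; apply/astabsP => p; rewrite /= apermE permE rot_link_pairs.
rewrite (pgroup_fix_mod rot_3group rot_acts) afix_cycle; congr (_ %% 3)%N.
by apply: eq_card => p; rewrite !inE sub1set !inE /= apermE permE.
Qed.

Lemma vertex_deg_mod3 : (vertex_deg T 0%R %% 3 = 0 \/ vertex_deg T 0%R %% 3 = 1)%N.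
Proof.
have := card_link_pairs_mod3; rewrite card_link_pairs.
case: card_rot_fixed_link_pairs => ->; lia.
Qed.

End CyclicTriangulation.

Lemma vertex_deg_ge2 n (T : {set {set 'I_n}}) v :
  closed_surface_triangulation T -> 2 <= vertex_deg T v.
Proof.
case=> triangleT cover edge2 _ _; have [t tT vt] := cover v.
have /card_gt0P[a /setD1P[av at_]] : 0 < #|t :\ v|.
  by move: (triangleT t tT); rewrite (cardsD1 v) vt add1n => -[->].
have vta : adj T v a by apply/existsP; exists t; rewrite tT vt at_.
rewrite -(edge2 v a _ vta) 1?eq_sym //.
by apply/subset_leq_card/subsetP => s; rewrite !inE => /andP[-> /andP[-> _]].
Qed.

Theorem mainTheorem4 (n : nat) (T : {set {set 'I_n}}) :
  cyclic_triangulation T ->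
  exists q k : nat, 1 <= k /\ (q = 3 * k \/ q = 3 * k + 1) /\ equivelar T q.
Proof.
case=> n3 [surfT shiftT]; have [triangleT _ _ _ _] := surfT.
case: n T n3 surfT triangleT shiftT => [|[|m]] // T _ surfT triangleT shiftT.
exists (vertex_deg T 0%R), (vertex_deg T 0%R %/ 3).
have := vertex_deg_ge2 0%R surfT; have := vertex_deg_mod3 shiftT triangleT.
move=> q_mod3 q_ge2; split; [lia | split; [lia | exact: vertex_deg_const]].
Qed.
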